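(* Let $A$ be an alternative algebra over a field $F$ with unit element $1$, admitting a derivation with invertible values $d$. Then: (a) if $L\neq 0$ is a one-sided (left or right) ideal of $A$, then $d(L)\neq 0$; (b) every nonzero proper left (respectively right) ideal of $A$ is both a minimal and a maximal left (respectively right) ideal of $A$; (c) if $I$ is a proper two-sided ideal of $A$, then $I^2=0$; (d) if $\operatorname{char}F\neq 2$ (i.e. $2A\neq 0$), then $A$ is simple.
   Context: An algebra $A$ is alternative if $(x,x,y)=0$ and $(x,y,y)=0$ for all $x,y\in A$, where $(x,y,z)=(xy)z-x(yz)$. An element $a$ of a unital alternative algebra is invertible if there is $b$ with $ab=ba=1$; $U$ denotes the set of invertible elements. A derivation with invertible values of $A$ is a nonzero derivation $d$ of $A$ such that for every $x\in A$ either $d(x)\in U$ or $d(x)=0$. A proper ideal is one different from $A$. *)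

From HB Require Import structures.
From mathcomp Require Import all_boot all_order all_algebra.
Set Implicit Arguments. Unset Strict Implicit. Unset Printing Implicit Defensive.
Import Order.TTheory GRing.Theory Num.Theory.
Local Open Scope ring_scope.

Section AltAlg.
Variables (F : fieldType) (A : lmodType F) (mul : A -> A -> A) (one : A).

Definition assoc (x y z : A) : A := mul (mul x y) z - mul x (mul y z).

Definition unital_alt_algebra : Prop :=
  [/\ (forall (a : F) (x y z : A), mul (a *: x + y) z = a *: mul x z + mul y z),
      (forall (a : F) (x y z : A), mul x (a *: y + z) = a *: mul x y + mul x z),
      (forall x : A, mul one x = x /\ mul x one = x),
      (forall x y : A, assoc x x y = 0) &
      (forall x y : A, assoc x y y = 0)].

Definition invertible (a : A) : Prop := exists b : A, mul a b = one /\ mul b a = one.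

Definition derivation (d : A -> A) : Prop :=
  [/\ (forall (a : F) (x y : A), d (a *: x + y) = a *: d x + d y) &
      (forall x y : A, d (mul x y) = mul (d x) y + mul x (d y))].

Definition deriv_inv_values (d : A -> A) : Prop :=
  [/\ derivation d, (exists x : A, d x <> 0) &
      (forall x : A, invertible (d x) \/ d x = 0)].

Definition subspace (L : A -> Prop) : Prop :=
  [/\ L 0, (forall x y, L x -> L y -> L (x + y)) & (forall (a : F) x, L x -> L (a *: x))].

Definition left_ideal (L : A -> Prop) : Prop :=
  subspace L /\ (forall a x, L x -> L (mul a x)).

Definition right_ideal (L : A -> Prop) : Prop :=
  subspace L /\ (forall a x, L x -> L (mul x a)).

Definition ideal (L : A -> Prop) : Prop := left_ideal L /\ right_ideal L.

Definition nonzero_set (L : A -> Prop) : Prop := exists x, L x /\ x <> 0.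
Definition zero_set (L : A -> Prop) : Prop := forall x, L x -> x = 0.
Definition proper_set (L : A -> Prop) : Prop := exists x, ~ L x.
Definition full_set (L : A -> Prop) : Prop := forall x, L x.
Definition set_sub (K L : A -> Prop) : Prop := forall x, K x -> L x.
Definition set_eq (K L : A -> Prop) : Prop := forall x, K x <-> L x.

Definition minimal_left_ideal (L : A -> Prop) : Prop :=
  [/\ left_ideal L, nonzero_set L &
      forall K, left_ideal K -> set_sub K L -> zero_set K \/ set_eq K L].
Definition maximal_left_ideal (L : A -> Prop) : Prop :=
  [/\ left_ideal L, proper_set L &
      forall K, left_ideal K -> set_sub L K -> set_eq K L \/ full_set K].
Definition minimal_right_ideal (L : A -> Prop) : Prop :=
  [/\ right_ideal L, nonzero_set L &
      forall K, right_ideal K -> set_sub K L -> zero_set K \/ set_eq K L].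
Definition maximal_right_ideal (L : A -> Prop) : Prop :=
  [/\ right_ideal L, proper_set L &
      forall K, right_ideal K -> set_sub L K -> set_eq K L \/ full_set K].

(* I^2 = 0 : the span of all products xy (x,y in I) is zero, i.e. all such
   products vanish *)
Definition square_zero (I : A -> Prop) : Prop :=
  forall x y, I x -> I y -> mul x y = 0.

Definition simple_algebra : Prop :=
  (exists x y : A, mul x y <> 0) /\
  (forall I, ideal I -> zero_set I \/ full_set I).

End AltAlg.

(* The proof rests on two facts.
   1. Inverse property: if u v = v u = 1 then u (v y) = y and (y v) u = y.
      We derive it from the skew-symmetry of the associator and the identity
      (a,b,bc) = (a,b,c) b, itself a consequence of Teichmueller's identity;
      the left-handed versions come from the opposite algebra.
   2. A proper left ideal contains no invertible element (it would contain 1).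
   (a) If d vanished on a left ideal L then, for a with d a invertible,
       d (a x) = d a * x = 0 forces x = 0 on L.  Hence any nonzero left ideal
       K has an element k with d k invertible, and then A = d(K) + K.
   (b) If L is a nonzero left ideal inside a proper left ideal K, write
       y in K as d l1 - l2 with l1, l2 in L; then d l1 lies in K, so it is not
       invertible, so d l1 = 0 and y is in L.  This gives minimality and
       maximality at once.
   (c) For a proper ideal I, d vanishes on products of I, and
       a (x y) = (a x) y + (x,a,y) then gives d a * (x y) = 0, so x y = 0.
   (d) With I^2 = 0 and d x invertible (inverse v) for some x in I,
       applying d to x (v x) = 0 gives 2 x = 0.
   Right-handed statements are obtained from the opposite algebra. *)
From HB Require Import structures.
From mathcomp Require Import all_boot all_order all_algebra.
From Stdlib Require Import Classical.
Set Implicit Arguments. Unset Strict Implicit. Unset Printing Implicit Defensive.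
Import Order.TTheory GRing.Theory Num.Theory.
Local Open Scope ring_scope.

(* The additive bookkeeping behind Teichmueller's identity. *)
Lemma teichmuller_shuffle (V : zmodType) (P Q R S U : V) :
  (P - Q) - (R - S) + (Q - U) = (S - U) + (P - R).
Proof.
rewrite opprB addrC !addrA -[Q - U + P]addrA [Q + _]addrC addrK.
by rewrite [- U + P + S]addrC !addrA.
Qed.

Definition opp_mul (A : Type) (mul : A -> A -> A) : A -> A -> A :=
  fun x y => mul y x.

Section AlternativeIdentities.
Variables (F : fieldType) (A : lmodType F) (mul : A -> A -> A) (one : A).
Hypothesis HA : unital_alt_algebra mul one.

Local Notation "(| x , y , z |)" := (assoc mul x y z).

Lemma mulDl x y z : mul (x + y) z = mul x z + mul y z.
Proof. by case: HA => H _ _ _ _; have := H 1 x y z; rewrite !scale1r. Qed.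

Lemma mulDr x y z : mul z (x + y) = mul z x + mul z y.
Proof. by case: HA => _ H _ _ _; have := H 1 z x y; rewrite !scale1r. Qed.

Lemma mul0l z : mul 0 z = 0.
Proof. by apply: (addrI (mul 0 z)); rewrite -mulDl !addr0. Qed.

Lemma mul0r z : mul z 0 = 0.
Proof. by apply: (addrI (mul z 0)); rewrite -mulDr !addr0. Qed.

Lemma mulNl x z : mul (- x) z = - mul x z.
Proof. by apply: (addrI (mul x z)); rewrite -mulDl !subrr mul0l. Qed.

Lemma mulNr x z : mul z (- x) = - mul z x.
Proof. by apply: (addrI (mul z x)); rewrite -mulDr !subrr mul0r. Qed.

Lemma mulBl x y z : mul (x - y) z = mul x z - mul y z.
Proof. by rewrite mulDl mulNl. Qed.

Lemma mulBr x y z : mul z (x - y) = mul z x - mul z y.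
Proof. by rewrite mulDr mulNr. Qed.

Lemma mul1l x : mul one x = x. Proof. by case: HA => _ _ H _ _; case: (H x). Qed.
Lemma mul1r x : mul x one = x. Proof. by case: HA => _ _ H _ _; case: (H x). Qed.

Lemma assoc_one x y : (| x, y, one |) = 0.
Proof. by rewrite /assoc !mul1r subrr. Qed.

Lemma assocDl x y b c : (| x + y, b, c |) = (| x, b, c |) + (| y, b, c |).
Proof. by rewrite /assoc !(mulDl, mulDr) opprD addrACA. Qed.

Lemma assocDm x y a c : (| a, x + y, c |) = (| a, x, c |) + (| a, y, c |).
Proof. by rewrite /assoc !(mulDl, mulDr) opprD addrACA. Qed.

Lemma assocDr x y a b : (| a, b, x + y |) = (| a, b, x |) + (| a, b, y |).
Proof. by rewrite /assoc !(mulDl, mulDr) opprD addrACA. Qed.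

Lemma alt_left x y : (| x, x, y |) = 0. Proof. by case: HA. Qed.
Lemma alt_right x y : (| x, y, y |) = 0. Proof. by case: HA. Qed.

(* Linearizing the alternative laws: the associator is alternating. *)
Lemma assoc_swap12 a b c : (| a, b, c |) = - (| b, a, c |).
Proof.
have := alt_left (a + b) c.
rewrite assocDl !assocDm !alt_left add0r addr0 => h.
by apply/eqP; rewrite -addr_eq0 h.
Qed.

Lemma assoc_swap23 a b c : (| a, b, c |) = - (| a, c, b |).
Proof.
have := alt_right a (b + c).
rewrite assocDm !assocDr !alt_right add0r addr0 => h.
by apply/eqP; rewrite -addr_eq0 h.
Qed.

Lemma assoc_cycle a b c : (| a, b, c |) = (| b, c, a |).
Proof. by rewrite assoc_swap12 assoc_swap23 opprK. Qed.

Lemma assoc_swap13 a b c : (| a, b, c |) = - (| c, b, a |).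
Proof. by rewrite [(| c, b, a |)]assoc_cycle assoc_swap12. Qed.

(* Teichmueller's identity, valid in every (bilinear) algebra. *)
Lemma teichmuller a b c d :
  (| mul a b, c, d |) - (| a, mul b c, d |) + (| a, b, mul c d |)
  = mul a (| b, c, d |) + mul (| a, b, c |) d.
Proof. by rewrite /assoc mulBr mulBl teichmuller_shuffle. Qed.

(* The identity (a,b,bc) = (a,b,c) b, from two instances of Teichmueller's
   identity in which alternativity kills most terms. *)
Lemma assoc_mulr_right a b c : (| a, b, mul b c |) = mul (| a, b, c |) b.
Proof.
have T1 := teichmuller a b b c; have T2 := teichmuller c a b b.
rewrite alt_left alt_right mul0l mul0r addr0 in T1.
rewrite !alt_right mul0r !add0r in T2.
rewrite [(| c, mul a b, b |)]assoc_cycle [(| c, a, mul b b |)]assoc_cycle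
        [(| c, a, b |)]assoc_cycle in T2.
rewrite -T2; apply/eqP; rewrite -subr_eq0 -T1; apply/eqP.
by rewrite opprD opprK addrC.
Qed.

End AlternativeIdentities.

Lemma assoc_opp (F : fieldType) (A : lmodType F) (mul : A -> A -> A) a b c :
  assoc (opp_mul mul) a b c = - assoc mul c b a.
Proof. by rewrite /assoc /opp_mul opprB. Qed.

Lemma opp_alt_algebra (F : fieldType) (A : lmodType F) (mul : A -> A -> A) (one : A) :
  unital_alt_algebra mul one -> unital_alt_algebra (opp_mul mul) one.
Proof.
move=> HA; split.
- by move=> a x y z; case: HA => _ H _ _ _; exact: H.
- by move=> a x y z; case: HA => H _ _ _ _; exact: H.
- by move=> x; split; [exact: (mul1r HA) | exact: (mul1l HA)].
- by move=> x y; rewrite assoc_opp (alt_right HA) oppr0.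
- by move=> x y; rewrite assoc_opp (alt_left HA) oppr0.
Qed.

Lemma opp_deriv_inv_values (F : fieldType) (A : lmodType F) (mul : A -> A -> A)
  (one : A) (d : A -> A) :
  deriv_inv_values mul one d -> deriv_inv_values (opp_mul mul) one d.
Proof.
case=> [[Hlin Hleibniz] Hnz Hinv]; split => //.
- by split => // x y; rewrite /opp_mul Hleibniz addrC.
- by move=> x; case: (Hinv x) => [[b [h1 h2]]|h]; [left; exists b | right].
Qed.

Section InverseProperty.
Variables (F : fieldType) (A : lmodType F) (mul : A -> A -> A) (one : A).
Hypothesis HA : unital_alt_algebra mul one.

Local Notation "(| x , y , z |)" := (assoc mul x y z).

(* The mirror identity (a,b,cb) = b (a,b,c), read off the opposite algebra. *)
Lemma assoc_mulr_left a b c : (| a, b, mul c b |) = mul b (| a, b, c |).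
Proof.
have := assoc_mulr_right (opp_alt_algebra HA) a b c.
rewrite (assoc_opp mul a b) (assoc_opp mul a b c) /opp_mul (mulNr HA).
move=> /oppr_inj h.
by rewrite (assoc_swap13 HA a) h (assoc_swap13 HA c) (mulNr HA) opprK.
Qed.

(* Inverse property: with u v = v u = 1 we get (y v) u = y.  Writing
   e = (y,v,u), the identities above give e v = v e = u e = 0, so
   (u,e,v) = 0 while (u,v,e) = e; skew-symmetry forces e = 0. *)
Lemma inverse_property_right u v y :
  mul u v = one -> mul v u = one -> mul (mul y v) u = y.
Proof.
move=> huv hvu; set e := (| y, v, u |).
have ev0 : mul e v = 0 by rewrite -(assoc_mulr_right HA) hvu (assoc_one HA).
have ve0 : mul v e = 0 by rewrite -assoc_mulr_left huv (assoc_one HA).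
have ue0 : mul u e = 0.
  by rewrite /e (assoc_swap23 HA) (mulNr HA) -assoc_mulr_left hvu
             (assoc_one HA) oppr0.
have e0 : e = 0.
  have : (| u, e, v |) = 0 by rewrite /assoc ue0 ev0 (mul0l HA) (mul0r HA) subrr.
  by rewrite (assoc_swap23 HA) /assoc huv ve0 (mul1l HA) (mul0r HA) subr0 => /eqP;
     rewrite oppr_eq0 => /eqP.
by move/eqP: e0; rewrite /e /assoc subr_eq0 hvu (mul1r HA) => /eqP.
Qed.

End InverseProperty.

Section InvertibleElements.
Variables (F : fieldType) (A : lmodType F) (mul : A -> A -> A) (one : A).
Hypothesis HA : unital_alt_algebra mul one.

Lemma inverse_property_left u v y :
  mul u v = one -> mul v u = one -> mul u (mul v y) = y.
Proof. by move=> huv hvu; have := inverse_property_right (opp_alt_algebra HA) y hvu huv. Qed.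

Lemma invertible_cancel u : invertible mul one u -> forall y, mul u y = 0 -> y = 0.
Proof.
by case=> v [huv hvu] y h; rewrite -(inverse_property_left y hvu huv) h (mul0r HA).
Qed.

(* A left ideal containing an invertible element contains 1, hence all of A. *)
Lemma proper_left_ideal_no_invertible L w :
  left_ideal mul L -> proper_set L -> L w -> ~ invertible mul one w.
Proof.
move=> [_ HL] [z nLz] Lw [b [_ hbw]]; apply: nLz.
by rewrite -(mul1r HA z); apply: (HL); rewrite -hbw; exact: HL.
Qed.

End InvertibleElements.

Lemma nonzero_of_not_zero (F : fieldType) (A : lmodType F) (K : A -> Prop) :
  ~ zero_set K -> nonzero_set K.
Proof.
move=> nz; apply: NNPP => nK; apply: nz => x Kx.
by apply: NNPP => nx; apply: nK; exists x.
Qed.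

Lemma proper_of_not_full (F : fieldType) (A : lmodType F) (K : A -> Prop) :
  ~ full_set K -> proper_set K.
Proof.
move=> nf; apply: NNPP => nK; apply: nf => x.
by apply: NNPP => nx; apply: nK; exists x.
Qed.

Section DerivationWithInvertibleValues.
Variables (F : fieldType) (A : lmodType F) (mul : A -> A -> A) (one : A).
Hypothesis HA : unital_alt_algebra mul one.
Variable d : A -> A.
Hypothesis Hd : deriv_inv_values mul one d.

Lemma derD x y : d (x + y) = d x + d y.
Proof. by case: Hd => [[H _] _ _]; have := H 1 x y; rewrite !scale1r. Qed.

Lemma der0 : d 0 = 0.
Proof. by apply: (addrI (d 0)); rewrite -derD !addr0. Qed.

Lemma derN x : d (- x) = - d x.
Proof. by apply: (addrI (d x)); rewrite -derD !subrr der0. Qed.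

Lemma derB x y : d (x - y) = d x - d y.
Proof. by rewrite derD derN. Qed.

Lemma derM x y : d (mul x y) = mul (d x) y + mul x (d y).
Proof. by case: Hd => [[_ H] _ _]. Qed.

Lemma der_invertible x : d x <> 0 -> invertible mul one (d x).
Proof. by case: Hd => _ _ Hinv nx; case: (Hinv x). Qed.

Lemma exists_invertible_value : exists a, invertible mul one (d a).
Proof. by case: Hd => _ [a na] _; exists a; exact: der_invertible. Qed.

(* d vanishes on no nonzero left ideal: for a with d a invertible and x in L,
   0 = d (a x) = d a * x, hence x = 0. *)
Lemma left_ideal_der_vanish_zero L :
  left_ideal mul L -> (forall x, L x -> d x = 0) -> zero_set L.
Proof.
move=> [_ HL] dL0 x Lx; have [a inv_da] := exists_invertible_value.
apply: (invertible_cancel HA inv_da).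
by have := dL0 _ (HL a x Lx); rewrite derM (dL0 _ Lx) (mul0r HA) addr0.
Qed.

Lemma left_ideal_der_nonzero L :
  left_ideal mul L -> nonzero_set L -> exists x, L x /\ d x <> 0.
Proof.
move=> HL [x0 [Lx0 nx0]]; apply: NNPP => nd; apply/nx0.
apply: (left_ideal_der_vanish_zero HL) => // x Lx.
by apply: NNPP => nx; apply: nd; exists x.
Qed.

(* A = d(K) + K for every nonzero left ideal K: with k in K, d k invertible of
   inverse v, we have y = d ((y v) k) - d (y v) k by the inverse property. *)
Lemma left_ideal_decompose K : left_ideal mul K -> nonzero_set K ->
  forall y, exists k1 k2, [/\ K k1, K k2 & y = d k1 - k2].
Proof.
move=> HK nK y; have [k [Kk nk]] := left_ideal_der_nonzero HK nK.
have [v [hkv hvk]] := der_invertible nk.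
exists (mul (mul y v) k), (mul (d (mul y v)) k); split; try exact: HK.2.
by rewrite derM (inverse_property_right HA y hkv hvk) addrC addKr.
Qed.

Lemma left_ideal_sub_eq K L : left_ideal mul K -> proper_set K ->
  left_ideal mul L -> nonzero_set L -> set_sub L K -> set_eq L K.
Proof.
move=> HK pK HL nL sLK y; split; first exact: sLK.
move=> Ky; have [l1 [l2 [Ll1 Ll2 ey]]] := left_ideal_decompose HL nL y.
rewrite ey in Ky *.
have Kdl1 : K (d l1).
  rewrite -(subrK l2 (d l1)); case: (HK) => [[_ KD _] _].
  exact: KD Ky (sLK _ Ll2).
have dl1 : d l1 = 0.
  apply: NNPP => nd.
  exact: (proper_left_ideal_no_invertible HA HK pK Kdl1 (der_invertible nd)).
by rewrite dl1 sub0r -scaleN1r; case: HL => [[_ _ LZ] _]; exact: LZ.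
Qed.

Lemma left_ideal_min_max L : left_ideal mul L -> nonzero_set L -> proper_set L ->
  minimal_left_ideal mul L /\ maximal_left_ideal mul L.
Proof.
move=> HL nL pL; split; split => // K HK.
- move=> sKL; case: (classic (zero_set K)) => [|nz]; [by left | right].
  exact: (left_ideal_sub_eq HL pL HK (nonzero_of_not_zero nz) sKL).
- move=> sLK; case: (classic (full_set K)) => [|nf]; [by right | left].
  move=> x; apply: iff_sym; move: x.
  exact: (left_ideal_sub_eq HK (proper_of_not_full nf) HL nL sLK).
Qed.

Lemma proper_ideal_square_zero I : ideal mul I -> proper_set I -> square_zero mul I.
Proof.
move=> [[HS HL] [_ HR]] pI x y Ix Iy.
have der_prod0 p q : I p -> I q -> d (mul p q) = 0.
  move=> Ip Iq; apply: NNPP => nd.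
  apply: (proper_left_ideal_no_invertible HA (conj HS HL) pI _ (der_invertible nd)).
  by rewrite derM; case: HS => _ ID _; apply: ID; [exact: HL | exact: HR].
have [a inv_da] := exists_invertible_value.
have expand : mul a (mul x y) = mul (mul a x) y + assoc mul x a y.
  by rewrite (assoc_swap12 HA x a y) /assoc opprB addrC subrK.
have : d (mul a (mul x y)) = 0.
  rewrite expand derD derB (der_prod0 _ _ (HL a x Ix) Iy).
  by rewrite (der_prod0 _ _ (HR a x Ix) Iy) (der_prod0 _ _ Ix (HL a y Iy)) subrr addr0.
rewrite derM (der_prod0 _ _ Ix Iy) (mul0r HA) addr0.
exact: (invertible_cancel HA inv_da).
Qed.

Lemma simple_of_char_not2 : (2 \notin [pchar F])%N -> simple_algebra mul.
Proof.
move=> h2; have two_nz : (2%:R : F) != 0 by move: h2; rewrite inE.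
split.
  (* 1 * 1 = 1 is nonzero, as otherwise A = 0 and d = 0. *)
  exists one, one; rewrite (mul1l HA) => one0.
  case: Hd => _ [a na] _; apply: na.
  by rewrite -(mul1l HA (d a)) one0 (mul0l HA).
move=> I HI; case: (classic (full_set I)) => [|nf]; [by right | left].
have sq := proper_ideal_square_zero HI (proper_of_not_full nf).
apply: (left_ideal_der_vanish_zero HI.1) => x Ix; apply: NNPP => nd.
have [w [hxw hwx]] := der_invertible nd.
have Iwx : I (mul w x) by case: HI => [[_ HL] _]; exact: HL.
have : d (mul x (mul w x)) = 0 by rewrite (sq _ _ Ix Iwx) der0.
rewrite derM derM (inverse_property_left HA x hxw hwx) (mulDr HA).
rewrite (sq _ _ Ix (HI.1.2 _ _ Ix)) hwx (mul1r HA) add0r -mulr2n -scaler_nat.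
by move/eqP; rewrite scaler_eq0 (negbTE two_nz) /= => /eqP x0; apply: nd; rewrite x0 der0.
Qed.

End DerivationWithInvertibleValues.

Theorem lemma1p3 (F : fieldType) (A : lmodType F) (mul : A -> A -> A) (one : A)
    (HA : unital_alt_algebra mul one) (d : A -> A) (Hd : deriv_inv_values mul one d) :
  (* (a) *)
  (forall L : A -> Prop, (left_ideal mul L \/ right_ideal mul L) -> nonzero_set L ->
     exists x, L x /\ d x <> 0) /\
  (* (b) *)
  (forall L : A -> Prop, left_ideal mul L -> nonzero_set L -> proper_set L ->
     minimal_left_ideal mul L /\ maximal_left_ideal mul L) /\
  (forall L : A -> Prop, right_ideal mul L -> nonzero_set L -> proper_set L ->
     minimal_right_ideal mul L /\ maximal_right_ideal mul L) /\
  (* (c) *)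
  (forall I : A -> Prop, ideal mul I -> proper_set I -> square_zero mul I) /\
  (* (d) *)
  ((2 \notin [pchar F])%N -> simple_algebra mul).
Proof.
(* Right ideals of A are the left ideals of the opposite algebra. *)
have HAop := opp_alt_algebra HA; have Hdop := opp_deriv_inv_values Hd.
split.
  move=> L [HL|HL]; first exact: (left_ideal_der_nonzero HA Hd HL).
  exact: (left_ideal_der_nonzero HAop Hdop (L := L) HL).
split; first by move=> L; exact: (left_ideal_min_max HA Hd).
split; first by move=> L; exact: (left_ideal_min_max HAop Hdop (L := L)).
split; first by move=> I; exact: (proper_ideal_square_zero HA Hd).
exact: (simple_of_char_not2 HA Hd).
Qed.
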